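(* Let $\lambda$ be a strict partition, $\mu$ a toggle-symmetric distribution on $J(P^{\mathrm{shift}}_\lambda)$, and $[i,j]\in P^{\mathrm{shift}}_\lambda$. Then \[\mathbb{E}(\mu;R^{\mathrm{shift}}_{ij})=\sum_{[i',j]\in P^{\mathrm{shift}}_\lambda}\mathbb{E}(\mu;\mathcal{T}^-_{[i',j]})+\sum_{[i,j']\in P^{\mathrm{shift}}_\lambda}\mathbb{E}(\mu;\mathcal{T}^-_{[i,j']})+\sum_{\substack{i'<i\\ [i',i']\in P^{\mathrm{shift}}_\lambda}}\mathbb{E}(\mu;\mathcal{T}^-_{[i',i']})+\sum_{\substack{j'>j\\ [j',j']\in P^{\mathrm{shift}}_\lambda}}\mathbb{E}(\mu;\mathcal{T}^-_{[j',j']}).\]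
   Context: A strict partition has $\lambda_i>\lambda_{i+1}$ whenever $\lambda_i\ne0$. $P^{\mathrm{shift}}_\lambda$ is the set of boxes $[i,j]$ with $1\le i\le\ell(\lambda)$, $i\le j\le i+\lambda_i-1$, ordered by $[i,j]\le[i',j']$ iff $i\le i'$ and $j\le j'$; $J(\cdot)$ is the lattice of order ideals. For a box $p$ and order ideal $I$: $\mathcal{T}^+_p(I)=1$ iff $p\notin I$ and $p$ is minimal in $P^{\mathrm{shift}}_\lambda\setminus I$; $\mathcal{T}^-_p(I)=1$ iff $p\in I$ and $p$ is maximal in $I$ (else $0$). $\mu$ is toggle-symmetric if $\mathbb{E}(\mu;\mathcal{T}^+_p)=\mathbb{E}(\mu;\mathcal{T}^-_p)$ for all $p$. The shifted rook at $[i,j]$ is \[R^{\mathrm{shift}}_{ij}:=\sum_{\substack{i'\le i,\ j'\le j}}\mathcal{T}^+_{[i',j']}+\sum_{\substack{i'\ge i,\ j'\ge j}}\mathcal{T}^-_{[i',j']}-\sum_{\substack{i'<i,\ j'<j,\ i'<j'}}\mathcal{T}^-_{[i',j']}-\sum_{\substack{i'>i,\ j'>j,\ i'<j'}}\mathcal{T}^+_{[i',j']},\] all sums over boxes $[i',j']\in P^{\mathrm{shift}}_\lambda$. *)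

From HB Require Import structures.
From mathcomp Require Import all_boot all_order all_algebra.
Set Implicit Arguments. Unset Strict Implicit. Unset Printing Implicit Defensive.
Import Order.TTheory GRing.Theory Num.Theory.
Local Open Scope ring_scope.

(* Parts of lambda: la = [:: lambda_1; lambda_2; ...] (1-based in the paper,
   lambda_i = nth 0 la i.-1); missing parts are 0. *)
Definition part (la : seq nat) (i : nat) : nat := nth 0%N la i.-1.

Definition strict_partition (la : seq nat) : Prop :=
  forall i : nat, (1 <= i)%N ->
    (part la i.+1 <= part la i)%N /\ (part la i != 0%N -> (part la i.+1 < part la i)%N).

Definition ell (la : seq nat) : nat := count (fun x => x != 0%N) la.

(* a bound on all coordinates of boxes of the shifted diagram *)
Definition bnd (la : seq nat) : nat := (size la + sumn la).+1.

Definition box_t (la : seq nat) : finType := ('I_(bnd la) * 'I_(bnd la))%type.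

Definition bi {la} (p : box_t la) : nat := val p.1.
Definition bj {la} (p : box_t la) : nat := val p.2.

Definition in_shift (la : seq nat) (p : box_t la) : bool :=
  [&& 1 <= bi p, bi p <= ell la, bi p <= bj p & bj p <= bi p + part la (bi p) - 1]%N.

Definition Psh (la : seq nat) : {set box_t la} := [set p | in_shift p].

Definition ble {la} (p q : box_t la) : bool := (bi p <= bi q)%N && (bj p <= bj q)%N.

Definition is_ideal (la : seq nat) (I : {set box_t la}) : bool :=
  (I \subset Psh la) &&
  [forall q, [forall p, ((q \in I) && (p \in Psh la) && ble p q) ==> (p \in I)]].

Section Toggles.
Variable R : realFieldType.
Variable la : seq nat.

Definition Tplus (p : box_t la) (I : {set box_t la}) : R :=
  ([&& p \in Psh la, p \notin I &
      [forall q, ((q \in Psh la) && (q \notin I) && ble q p) ==> (q == p)]] : bool)%:R.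

Definition Tminus (p : box_t la) (I : {set box_t la}) : R :=
  ([&& p \in I &
      [forall q, ((q \in I) && ble p q) ==> (q == p)]] : bool)%:R.

(* a probability distribution on J(P^shift_lambda): a function on sets whose
   values on order ideals are nonnegative and sum to 1 (values off J are irrelevant) *)
Definition distribution (mu : {set box_t la} -> R) : Prop :=
  (forall I, is_ideal I -> 0 <= mu I) /\
  \sum_(I : {set box_t la} | is_ideal I) mu I = 1.

Definition Expect (mu : {set box_t la} -> R) (f : {set box_t la} -> R) : R :=
  \sum_(I : {set box_t la} | is_ideal I) mu I * f I.

Definition toggle_symmetric (mu : {set box_t la} -> R) : Prop :=
  forall p : box_t la, p \in Psh la -> Expect mu (Tplus p) = Expect mu (Tminus p).

Definition rook_shift (p : box_t la) (I : {set box_t la}) : R :=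
    \sum_(q in Psh la | (bi q <= bi p)%N && (bj q <= bj p)%N) Tplus q I
  + \sum_(q in Psh la | (bi q >= bi p)%N && (bj q >= bj p)%N) Tminus q I
  - \sum_(q in Psh la | [&& bi q < bi p, bj q < bj p & bi q < bj q]%N) Tminus q I
  - \sum_(q in Psh la | [&& bi q > bi p, bj q > bj p & bi q < bj q]%N) Tplus q I.

End Toggles.

Arguments Tplus {R la} p I.
Arguments Tminus {R la} p I.
Arguments rook_shift {R la} p I.
Arguments Expect {R la} mu f.
Arguments distribution {R la} mu.
Arguments toggle_symmetric {R la} mu.

From HB Require Import structures.
From mathcomp Require Import all_boot all_order all_algebra.
From mathcomp Require Import zify ring.
Import Order.TTheory GRing.Theory Num.Theory.
Local Open Scope ring_scope.

(* Expectation is linear, so toggle-symmetry turns every T^+ in the rook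
   statistic into the matching T^-, and E(R_ij) becomes a combination of the
   E(T^-_q) whose coefficient at q counts the four sums of the rook.  For a box
   q = [i',j'] with i' <= j' this coefficient equals the number of conditions
   among j' = j, i' = i, (i' = j' < i), (i' = j' > j) that hold, which is a
   case check on the relative position of q and [i,j]. *)

Lemma rook_indicator_count {i' j' i j : nat} : (i' <= j')%N -> (i <= j)%N ->
  (((i' <= i) && (j' <= j)) + ((i <= i') && (j <= j'))
   = [&& i' < i, j' < j & i' < j'] + [&& i < i', j < j' & i' < j']
     + (j' == j) + (i' == i) + ((i' == j') && (i' < i)) + ((i' == j') && (j < i')))%N.
Proof. by move=> *; lia. Qed.

Section Expectation.
Variables (R : realFieldType) (la : seq nat) (mu : {set box_t la} -> R).

Lemma ExpectD (f g : {set box_t la} -> R) :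
  Expect mu (fun I => f I + g I) = Expect mu f + Expect mu g.
Proof. by rewrite /Expect -big_split; apply: eq_bigr => I _; rewrite mulrDr. Qed.

Lemma ExpectB (f g : {set box_t la} -> R) :
  Expect mu (fun I => f I - g I) = Expect mu f - Expect mu g.
Proof. by rewrite /Expect -sumrB; apply: eq_bigr => I _; rewrite mulrBr. Qed.

Lemma Expect_sum (P : pred (box_t la)) (F : box_t la -> {set box_t la} -> R) :
  Expect mu (fun I => \sum_(q | P q) F q I) = \sum_(q | P q) Expect mu (F q).
Proof.
by rewrite /Expect exchange_big; apply: eq_bigr => I _; rewrite mulr_sumr.
Qed.

Lemma sum_Psh_mkcond (P : pred (box_t la)) (F : box_t la -> R) :
  \sum_(q in Psh la | P q) F q = \sum_(q in Psh la) (P q)%:R * F q.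
Proof.
by rewrite big_mkcondr; apply: eq_bigr => q _; case: (P q); rewrite ?mul1r ?mul0r.
Qed.

Hypothesis mu_sym : toggle_symmetric mu.

Lemma Expect_Tplus_sum (P : pred (box_t la)) :
  \sum_(q in Psh la | P q) Expect mu (Tplus q)
  = \sum_(q in Psh la | P q) Expect mu (Tminus q).
Proof. by apply: eq_bigr => q /andP[q_in _]; apply: mu_sym. Qed.

Lemma Expect_rook_shift (p : box_t la) :
  Expect mu (rook_shift p) = \sum_(q in Psh la)
    ( ((bi q <= bi p) && (bj q <= bj p))%N%:R
    + ((bi p <= bi q) && (bj p <= bj q))%N%:R
    - [&& bi q < bi p, bj q < bj p & bi q < bj q]%N%:R
    - [&& bi p < bi q, bj p < bj q & bi q < bj q]%N%:R) * Expect mu (Tminus q).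
Proof.
rewrite /rook_shift !ExpectB ExpectD !Expect_sum !Expect_Tplus_sum.
rewrite !sum_Psh_mkcond -big_split -!sumrB /=.
by apply: eq_bigr => q _; rewrite !mulrBl mulrDl.
Qed.

End Expectation.

Theorem lemma5p3 (R : realFieldType) (la : seq nat) (Hla : strict_partition la)
  (mu : {set box_t la} -> R) (Hmu : distribution mu)
  (Hts : toggle_symmetric mu) (p : box_t la) (Hp : p \in Psh la) :
  Expect mu (rook_shift p) =
      \sum_(q in Psh la | bj q == bj p) Expect mu (Tminus q)
    + \sum_(q in Psh la | bi q == bi p) Expect mu (Tminus q)
    + \sum_(q in Psh la | (bi q == bj q) && (bi q < bi p)%N) Expect mu (Tminus q)
    + \sum_(q in Psh la | (bi q == bj q) && (bi q > bj p)%N) Expect mu (Tminus q).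
Proof.
have diag_le (r : box_t la) : r \in Psh la -> (bi r <= bj r)%N.
  by rewrite inE => /and4P[].
rewrite Expect_rook_shift // !sum_Psh_mkcond -!big_split /=.
apply: eq_bigr => q q_in.
have /(congr1 (fun n : nat => n%:R : R)) :=
  rook_indicator_count (diag_le q q_in) (diag_le p Hp).
rewrite !natrD => count_eq.
rewrite -!mulrDl; congr (_ * _).
by rewrite count_eq; ring.
Qed.
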